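(* A topological space $X$ is set strongly star Menger if and only if every closed subspace of $X$ is strongly star Menger.
   Context: For a family $\mathcal U$ of subsets of $X$ and $A\subseteq X$, $st(A,\mathcal U)=\bigcup\{U\in\mathcal U: U\cap A\neq\emptyset\}$. A space $Y$ is strongly star Menger if for every sequence $(\mathcal U_n:n\in\omega)$ of open covers of $Y$ there are finite sets $F_n\subseteq Y$ with $Y=\bigcup_{n}st(F_n,\mathcal U_n)$. A space $X$ is set strongly star Menger if for every nonempty $A\subseteq X$ and every sequence $(\mathcal U_n:n\in\omega)$ of families of open subsets of $X$ with $\overline A\subseteq\bigcup\mathcal U_n$ for all $n$, there are finite sets $F_n\subseteq\overline A$ ($n\in\omega$) with $A\subseteq\bigcup_{n}st(F_n,\mathcal U_n)$. *)

From HB Require Import structures.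
From mathcomp Require Import all_boot all_order.
From mathcomp Require Import boolp classical_sets cardinality topology.
Set Implicit Arguments. Unset Strict Implicit. Unset Printing Implicit Defensive.
Local Open Scope classical_set_scope.

Definition star {T : Type} (A : set T) (U : set (set T)) : set T :=
  \bigcup_(V in [set V | U V /\ V `&` A !=set0]) V.

Definition subspace_open_cover {T : topologicalType} (Y : set T)
  (U : set (set T)) : Prop :=
  (forall V, U V -> exists W, open W /\ V = W `&` Y) /\
  Y `<=` \bigcup_(V in U) V.

Definition strongly_star_Menger_subspace {T : topologicalType} (Y : set T) : Prop :=
  forall U : nat -> set (set T), (forall n, subspace_open_cover Y (U n)) ->
  exists F : nat -> set T,
    (forall n, finite_set (F n) /\ F n `<=` Y) /\
    Y `<=` \bigcup_n star (F n) (U n).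

Definition set_strongly_star_Menger (T : topologicalType) : Prop :=
  forall A : set T, A !=set0 ->
  forall U : nat -> set (set T),
    (forall n, (forall V, U n V -> open V) /\ closure A `<=` \bigcup_(V in U n) V) ->
  exists F : nat -> set T,
    (forall n, finite_set (F n) /\ F n `<=` closure A) /\
    A `<=` \bigcup_n star (F n) (U n).

From mathcomp Require Import all_boot all_order.
From mathcomp Require Import boolp classical_sets cardinality topology.
Set Implicit Arguments. Unset Strict Implicit. Unset Printing Implicit Defensive.
Local Open Scope classical_set_scope.

(* Open families of X covering a closed set C and relatively open covers of
   the subspace C correspond to each other by taking traces W `&` C.  As the
   finite sets F_n are chosen inside C, the star of F_n with respect to the
   trace family is the trace of the star in X.  So set strong star Mengerness
   for A = C yields the subspace property of a closed C, and conversely the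
   subspace property of the closed set closure A yields the covering of A. *)

Definition trace {T : Type} (Y : set T) (U : set (set T)) : set (set T) :=
  [set W `&` Y | W in U].

Section Star.
Variable T : Type.
Implicit Types (F Y : set T) (U V : set (set T)).

Lemma starS F U V : U `<=` V -> star F U `<=` star F V.
Proof. by move=> UV x [W [UW FW] Wx]; exists W => //; split => //; apply: UV. Qed.

Lemma star_trace F Y U : F `<=` Y -> star F (trace Y U) = star F U `&` Y.
Proof.
move=> FY; apply/seteqP; split => [x [_ [[W UW <-] FW] [Wx Yx]]|x [[W [UW FW] Wx] Yx]].
  by split => //; exists W => //; split => //; case: FW => y [[Wy _] Fy]; exists y.
exists (W `&` Y) => //; split; first by exists W.
by case: FW => y [Wy Fy]; exists y; split => //; split => //; apply: FY.
Qed.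

End Star.

Section Subspace.
Variable T : topologicalType.
Implicit Types (Y : set T) (U : set (set T)).

Lemma subspace_open_cover_trace Y U :
  (forall W, U W -> open W) -> Y `<=` \bigcup_(W in U) W ->
  subspace_open_cover Y (trace Y U).
Proof.
move=> oU YU; split => [_ [W UW <-]|x Yx]; first by exists W; split => //; apply: oU.
by have [W UW Wx] := YU x Yx; exists (W `&` Y) => //; exists W.
Qed.

Definition open_lift Y U : set (set T) := [set W | open W /\ U (W `&` Y)].

Lemma trace_open_lift Y U : trace Y (open_lift Y U) `<=` U.
Proof. by move=> _ [W [_ UW] <-]. Qed.

Lemma open_lift_cover Y U : subspace_open_cover Y U ->
  Y `<=` \bigcup_(W in open_lift Y U) W.
Proof.
move=> [oU YU] x Yx; have [V UV Vx] := YU x Yx.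
have [W [oW VW]] := oU V UV; subst V.
by exists W => //; case: Vx.
Qed.

Lemma strongly_star_Menger_subspace0 : strongly_star_Menger_subspace (@set0 T).
Proof. by move=> U _; exists (fun=> set0); split => // n; split. Qed.

End Subspace.

Theorem proposition2p2 (T : topologicalType) :
  set_strongly_star_Menger T <->
  (forall C : set T, closed C -> strongly_star_Menger_subspace C).
Proof.
split => [sSM C cC|sSMC A _ U covU].
- have [->|/set0P C0] := eqVneq C set0; first exact: strongly_star_Menger_subspace0.
  have clC : closure C = C by rewrite -(closure_id C).1.
  move=> U covU.
  have [|F [FC starF]] := sSM C C0 (fun n => open_lift C (U n)).
    by move=> n; split=> [W []//|]; rewrite clC; apply: open_lift_cover.
  rewrite clC in FC; exists F; split => // x Cx.
  have [n _ xF] := starF x Cx; exists n => //.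
  apply: (starS (@trace_open_lift _ C (U n))).
  by rewrite star_trace; [split | apply: (FC n).2].
- have [|F [FC starF]] :=
    sSMC (closure A) (@closed_closure _ A) (fun n => trace (closure A) (U n)).
    by move=> n; have [oU clAU] := covU n; apply: subspace_open_cover_trace.
  exists F; split => // x Ax.
  have [n _] := starF x (subset_closure Ax).
  by rewrite star_trace; [case=> xF _; exists n | apply: (FC n).2].
Qed.
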